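(* If $G$ is a bipartite, connected, nontraceable detour graph, then $\Delta(G)\le \left\lceil \frac{\tau(G)-2}{2}\right\rceil$.
   Context: All graphs are finite and simple; the order of a path is its number of vertices. For a vertex $v$, $\tau(v)$ is the order of a longest path in $G$ having $v$ as an endvertex, and $\tau(G)$ is the order of a longest path in $G$. A detour graph is one in which all vertices have the same $\tau(v)$. Nontraceable means having no hamiltonian path. $\Delta(G)$ is the maximum degree. *)

(* Simple graphs: symmetric irreflexive e : rel T on T : finType. *)
From mathcomp Require Import all_boot.
Set Implicit Arguments. Unset Strict Implicit. Unset Printing Implicit Defensive.

Section Graphs.
Variable T : finType.
Variable e : rel T.

Definition gpath (p : seq T) : bool :=
  if p is x :: s then path e x s && uniq p else false.

Definition endv (p : seq T) (v : T) : bool :=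
  if p is x :: s then (x == v) || (last x s == v) else false.

Definition tau_v (v : T) : nat :=
  \max_(n < #|T|.+1 | [exists p : n.-tuple T, gpath p && endv p v]) n.

Definition tau : nat :=
  \max_(n < #|T|.+1 | [exists p : n.-tuple T, gpath p]) n.

Definition detour : Prop := forall u v : T, tau_v u = tau_v v.

Definition traceable : Prop := exists p : seq T, gpath p && (size p == #|T|).

Definition bipartite : Prop :=
  exists f : T -> bool, forall x y, e x y -> f x != f y.

Definition gconnected : Prop := forall x y : T, connect e x y.

Definition maxdeg : nat := \max_(v : T) #|[set u | e v u]|.

(* ceil((t-2)/2) for t >= 2 (nat) *)
Definition ceil_half_minus2 (t : nat) : nat := (t - 1) %/ 2.
End Graphs.

From mathcomp Require Import all_boot.
Set Implicit Arguments. Unset Strict Implicit. Unset Printing Implicit Defensive.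

(* In a detour graph every vertex is the end of a longest path v = x_0, ..., x_(t-1)
   with t = tau(G).  Maximality forces every neighbour of v onto this path, and
   bipartiteness forces it to an odd position.  It cannot sit at the last position
   t-1: the path would close into a cycle of order t < |G| (G is nontraceable), and
   connectivity would extend that cycle into a path of order t+1.  So the
   neighbours of v lie among the odd positions below t-1, of which there are
   (t-1)/2 = ceil((t-2)/2). *)

Section LongestPaths.
Variables (T : finType) (e : rel T).

Lemma gpath_size_le p : gpath e p -> size p <= #|T|.
Proof. by case: p => // x s /andP[_ /card_uniqP <-]; apply: max_card. Qed.

Lemma gpath_le_tau p : gpath e p -> size p <= tau e.
Proof.
move=> gp; have ltp : size p < #|T|.+1 by rewrite ltnS gpath_size_le.
apply: (@leq_bigmax_cond _ _ _ (Ordinal ltp)).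
by apply/existsP; exists (in_tuple p).
Qed.

Lemma gpath_le_tau_v p v : gpath e p -> endv p v -> size p <= tau_v e v.
Proof.
move=> gp pv; have ltp : size p < #|T|.+1 by rewrite ltnS gpath_size_le.
apply: (@leq_bigmax_cond _ _ _ (Ordinal ltp)).
by apply/existsP; exists (in_tuple p); rewrite gp pv.
Qed.

Lemma exists_max_tuple (Q : pred (seq T)) x : Q [:: x] ->
  exists p, Q p && (size p == \max_(n < #|T|.+1 | [exists p : n.-tuple T, Q p]) n).
Proof.
move=> Qx; have lt1 : 1 < #|T|.+1 by rewrite ltnS; apply/card_gt0P; exists x.
have Q1 : [exists p : (Ordinal lt1).-tuple T, Q p] by apply/existsP; exists [tuple x].
rewrite (bigmax_eq_arg (Ordinal lt1)) //.
pose P (n : 'I_#|T|.+1) := [exists p : n.-tuple T, Q p].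
case: (@arg_maxnP _ (Ordinal lt1) P (@nat_of_ord _) Q1) => i /existsP[p Qp] _.
by exists p; rewrite Qp size_tuple eqxx.
Qed.

Lemma exists_longest_path : 0 < #|T| -> exists p, gpath e p && (size p == tau e).
Proof. by case/card_gt0P=> x _; apply: (@exists_max_tuple (gpath e) x). Qed.

Lemma exists_longest_path_at v :
  exists p, [&& gpath e p, endv p v & size p == tau_v e v].
Proof.
have [|p /andP[/andP[gp pv] sp]] :=
  @exists_max_tuple (fun p => gpath e p && endv p v) v; first by rewrite /= eqxx.
by exists p; rewrite gp pv.
Qed.

Lemma tau_lt_card : 0 < #|T| -> ~ traceable e -> tau e < #|T|.
Proof.
move=> T_gt0 ntr; have [p /andP[gp /eqP <-]] := exists_longest_path T_gt0.
rewrite ltn_neqAle gpath_size_le // andbT.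
by apply: contra_notN ntr => sp; exists p; rewrite gp.
Qed.

Lemma detour_tau_v : 0 < #|T| -> detour e -> forall v, tau_v e v = tau e.
Proof.
move=> T_gt0 det v; have [[|x s] // /andP[gp /eqP sp]] := exists_longest_path T_gt0.
rewrite (det v x); apply/anti_leq/andP; split; last first.
  by rewrite -sp gpath_le_tau_v //= eqxx.
by have [q /and3P[gq _ /eqP <-]] := exists_longest_path_at x; apply: gpath_le_tau.
Qed.

Lemma exit_edge (A : pred T) a q :
  a \in A -> path e a q -> last a q \notin A ->
  exists x y, [/\ x \in A, y \notin A & e x y].
Proof.
elim: q a => [|b q IHq] a /=; first by move=> ->.
move=> aA /andP[eab pb] lq; case bA: (b \in A); first exact: IHq pb lq.
by exists a, b; rewrite bA.
Qed.

Hypothesis esym : symmetric e.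

Lemma gpath_rev p : gpath e p -> gpath e (rev p).
Proof.
case: p => // x s /andP[pxs uxs].
have revE : rev (x :: s) = last x s :: rev (belast x s) by rewrite lastI rev_rcons.
have := uxs; rewrite -rev_uniq revE /gpath => ->; rewrite andbT rev_path.
by rewrite (@eq_path _ _ e) // => a b; rewrite esym.
Qed.

Lemma longest_path_from v : exists s, gpath e (v :: s) /\ size (v :: s) = tau_v e v.
Proof.
have [[|y r] // /and3P[gp /orP[/eqP <- | /eqP lv] /eqP sp]] := exists_longest_path_at v.
  by exists r.
exists (rev (belast y r)); split; last by rewrite /= size_rev size_belast.
by have := gpath_rev gp; rewrite lastI rev_rcons lv.
Qed.

Lemma gpath_cons u v s :
  e u v -> u \notin v :: s -> gpath e (v :: s) -> gpath e (u :: v :: s).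
Proof. by move=> euv u_new /andP[pvs uvs]; rewrite /gpath /= euv pvs u_new. Qed.

Lemma longest_path_nbr_mem v s u :
  gpath e (v :: s) -> size (v :: s) = tau e -> e v u -> u \in v :: s.
Proof.
move=> gp sp evu; apply: contraT => u_new.
have euv : e u v by rewrite esym.
by have := gpath_le_tau (gpath_cons euv u_new gp); rewrite -sp /= ltnn.
Qed.

Lemma cyclic_path_lt_tau v s :
  gconnected e -> gpath e (v :: s) -> e v (last v s) -> size (v :: s) < #|T| ->
  size (v :: s) < tau e.
Proof.
move=> conn /andP[pvs uvs] e_last lt_card.
have /existsP[w w_new] : [exists w, w \notin v :: s].
  apply: contraLR lt_card => /existsPn all_in; rewrite -leqNgt -(card_uniqP uvs).
  by apply/subset_leq_card/subsetP => y _; have := all_in y; rewrite negbK.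
have /connectP[q pq wq] := conn v w.
have [|x [y [x_in y_new exy]]] := @exit_edge (mem (v :: s)) v q (mem_head v s) pq.
  by rewrite -wq.
have [i r rot_xr] := rot_to x_in.
have gxr : gpath e (x :: r).
  rewrite /gpath -rot_xr rot_uniq uvs andbT.
  have : cycle e (v :: s) by rewrite /= rcons_path pvs esym.
  by rewrite -(rot_cycle i) rot_xr /= rcons_path => /andP[].
have y_new' : y \notin x :: r by rewrite -rot_xr mem_rot.
have eyx : e y x by rewrite esym.
have size_xr : size (x :: r) = size (v :: s) by rewrite -rot_xr size_rot.
by rewrite -size_xr; apply: gpath_le_tau (gpath_cons eyx y_new' gxr).
Qed.

Lemma longest_path_nbr_index_lt v s u :
  gconnected e -> tau e < #|T| -> gpath e (v :: s) -> size (v :: s) = tau e ->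
  e v u -> index u (v :: s) < size s.
Proof.
move=> conn tau_lt gp sp evu; have u_in := longest_path_nbr_mem gp sp evu.
rewrite ltn_neqAle -ltnS -[(size s).+1]/(size (v :: s)) index_mem u_in andbT.
apply/eqP => idx_u.
have last_u : last v s = u by rewrite -(nth_index v u_in) idx_u nth_last.
have e_last : e v (last v s) by rewrite last_u.
by have := cyclic_path_lt_tau conn gp e_last; rewrite sp ltnn => /(_ tau_lt).
Qed.

End LongestPaths.

Lemma bipartite_path_parity (T : finType) (e : rel T) (f : T -> bool) x0 :
  (forall a b, e a b -> f a != f b) ->
  forall s x j, path e x s -> j < size (x :: s) ->
  f (nth x0 (x :: s) j) = f x (+) odd j.
Proof.
move=> fP; elim=> [|y s IHs] x [|j] //=; rewrite ?addbF // ltnS.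
case/andP=> exy py lt_js; rewrite IHs //.
by move/fP: exy; case: (f x); case: (f y); case: (odd j).
Qed.

Lemma bipartite_nbr_index_odd (T : finType) (e : rel T) (f : T -> bool) v s u :
  (forall x y, e x y -> f x != f y) -> gpath e (v :: s) -> e v u -> u \in v :: s ->
  odd (index u (v :: s)).
Proof.
move=> fP /andP[pvs _] evu u_in.
have idx_lt : index u (v :: s) < size (v :: s) by rewrite index_mem.
have := bipartite_path_parity v fP pvs idx_lt; rewrite nth_index // => f_u.
by move: (fP v u evu); rewrite f_u; case: (f v); case: (odd _).
Qed.

Lemma count_odd_iota n : count odd (iota 0 n) = n./2.
Proof.
elim: n => // n IHn; rewrite -addn1 iotaD count_cat IHn /= add0n addn0 addn1.
by rewrite -[n.+1./2]/(uphalf n) uphalf_half addnC.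
Qed.

Lemma card_le_odd_indices (T : finType) (A : {set T}) (s : seq T) n :
  {subset A <= s} -> (forall u, u \in A -> odd (index u s) && (index u s < n)) ->
  #|A| <= n./2.
Proof.
move=> As idxA; rewrite -count_odd_iota -size_filter cardE -(size_map (index^~ s)).
apply: uniq_leq_size => [|i /mapP[a]]; rewrite ?mem_enum.
  rewrite map_inj_in_uniq ?enum_uniq // => a b; rewrite !mem_enum => aA bA.
  exact: (index_inj a (As a aA) (As b bA)).
by move=> aA ->; rewrite mem_filter mem_iota add0n; case/andP: (idxA a aA) => -> ->.
Qed.

Theorem theorem2p27 (T : finType) (e : rel T) :
  symmetric e -> irreflexive e -> 0 < #|T| ->
  bipartite e -> gconnected e -> ~ traceable e -> detour e ->
  maxdeg e <= ceil_half_minus2 (tau e).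
Proof.
move=> esym _ T_gt0 [f fP] conn ntr det.
have tau_lt := tau_lt_card T_gt0 ntr.
apply/bigmax_leqP => v _.
have [s [gs]] := longest_path_from esym v; rewrite detour_tau_v // => sp.
rewrite /ceil_half_minus2 divn2 subn1 -sp /=.
apply: (@card_le_odd_indices _ _ (v :: s)) => u; rewrite in_set => evu.
  exact: (longest_path_nbr_mem esym gs sp evu).
have u_in := longest_path_nbr_mem esym gs sp evu.
by rewrite (bipartite_nbr_index_odd fP gs evu u_in) (longest_path_nbr_index_lt esym).
Qed.
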